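(* Let $G$ be a digraph and $t,t'\in B_n$ with $t\neq t'$. If $\mathbb{A}(G)$ satisfies the identity $t\approx t'$, then $M_G$ divides $M_{t,t'}$ and $P_G<H_{t,t'}$.
   Context: Digraphs $G=(V,E)$ have $E\subseteq V\times V$, loops allowed, possibly infinite. The graph algebra $\mathbb{A}(G)$ is the groupoid on $V\cup\{\infty\}$ with $xy=x$ if $x,y\in V$ and $(x,y)\in E$, and $xy=\infty$ otherwise. $B_n$ is the set of binary terms in which $x_1,\dots,x_n$ each occur once in this order; for $t\in B_n$ the rooted tree $G(t)$ is defined recursively: $G(x_i)$ is a single vertex, $G(t_1t_2)$ is $G(t_1)\cup G(t_2)$ plus an edge from the leftmost variable of $t_1$ to that of $t_2$; root $x_1$. With $T=G(t)$, $T'=G(t')$, depth $d_T$, height $h$: $H_{t,t'}=\min(h(T),h(T'))$ and $M_{t,t'}=\gcd\{|d_T(x)-d_{T'}(x)|:x\in\{x_1,\dots,x_n\}\}$. A strongly connected component (SCC) is trivial if it is a single vertex without a loop. For $m\ge1$, an $m$-whirl is a digraph whose vertex set is partitioned into nonempty blocks $B_0,\dots,B_{m-1}$ (indices mod $m$) with edge set exactly $\bigcup_iB_i\times B_{i+1}$. $M_G$ is the lcm of all $m$ such that some SCC of $G$ is an $m$-whirl ($1$ if there is none, $\infty$ if such $m$ are unbounded). A path is pleasant if all its vertices lie in trivial SCCs; $P_G$ is the maximal length of a pleasant path ($\infty$ if unbounded, $-\infty$ if none). *)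

From Stdlib Require Import ClassicalEpsilon Relations.
From mathcomp Require Import all_boot.
Set Implicit Arguments. Unset Strict Implicit. Unset Printing Implicit Defensive.

Definition pb (P : Prop) : bool :=
  if excluded_middle_informative P then true else false.

Lemma pbP (P : Prop) : reflect P (pb P).
Proof. by rewrite /pb; case: excluded_middle_informative => H; constructor. Qed.

(* Graph algebra A(G): carrier V ∪ {∞} encoded as option V (None = ∞). *)
Definition galg_op (V : Type) (E : V -> V -> Prop) (x y : option V) : option V :=
  match x, y with
  | Some a, Some b => if pb (E a b) then Some a else None
  | _, _ => None
  end.

Inductive term : Type :=
| Var : nat -> term
| App : term -> term -> term.

Fixpoint eval (V : Type) (E : V -> V -> Prop) (s : nat -> option V) (t : term)
  : option V :=
  match t with
  | Var i => s i
  | App t1 t2 => galg_op E (eval E s t1) (eval E s t2)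
  end.

Definition satisfies (V : Type) (E : V -> V -> Prop) (t t' : term) : Prop :=
  forall s : nat -> option V, eval E s t = eval E s t'.

Fixpoint vars (t : term) : seq nat :=
  match t with
  | Var i => [:: i]
  | App t1 t2 => vars t1 ++ vars t2
  end.

Definition in_B (n : nat) (t : term) : Prop := vars t = iota 1 n.

Fixpoint leftmost (t : term) : nat :=
  match t with
  | Var i => i
  | App t1 _ => leftmost t1
  end.

(* Edge set of the rooted tree G(t) (root = leftmost variable):
   G(t1 t2) = G(t1) ∪ G(t2) plus the edge leftmost(t1) -> leftmost(t2). *)
Fixpoint tree_edges (t : term) : seq (nat * nat) :=
  match t with
  | Var _ => [::]
  | App t1 t2 => (leftmost t1, leftmost t2) :: tree_edges t1 ++ tree_edges t2
  end.

(* Depth d_T(x) of vertex x in T = G(t) (distance from the root),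
   computed along the recursive construction of G(t): in G(t1 t2) the
   vertices of G(t1) keep their depth, and G(t2) hangs below the root of
   G(t1) via the edge to its own root, so its depths increase by one. *)
Fixpoint depth (t : term) (x : nat) : nat :=
  match t with
  | Var _ => 0
  | App t1 t2 => if x \in vars t1 then depth t1 x else (depth t2 x).+1
  end.

Definition height (t : term) : nat := \max_(x <- vars t) depth t x.

Definition absdiff (a b : nat) : nat := (a - b) + (b - a).

Definition Htt (t t' : term) : nat := minn (height t) (height t').

Definition Mtt (n : nat) (t t' : term) : nat :=
  \big[gcdn/0]_(x <- iota 1 n) absdiff (depth t x) (depth t' x).

Definition reach (V : Type) (E : V -> V -> Prop) : V -> V -> Prop :=
  clos_refl_trans V E.

Definition is_scc (V : Type) (E : V -> V -> Prop) (C : V -> Prop) : Prop :=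
  exists x, forall y, C y <-> (reach E x y /\ reach E y x).

Definition trivial_scc (V : Type) (E : V -> V -> Prop) (C : V -> Prop) : Prop :=
  is_scc E C /\ exists v, (forall y, C y <-> y = v) /\ ~ E v v.

(* The subgraph induced on C is an m-whirl: the vertex set C is partitioned
   into nonempty blocks B_0, ..., B_{m-1} (B_i = {v in C | f v = i}) and the
   edge set is exactly the union of B_i × B_{i+1 mod m}. *)
Definition is_whirl (V : Type) (E : V -> V -> Prop) (C : V -> Prop) (m : nat)
  : Prop :=
  0 < m /\
  exists f : V -> nat,
    (forall v, C v -> f v < m) /\
    (forall i, i < m -> exists v, C v /\ f v = i) /\
    (forall u v, C u -> C v -> (E u v <-> f v = (f u).+1 %% m)).

Definition has_whirl (V : Type) (E : V -> V -> Prop) (m : nat) : Prop :=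
  exists C, is_scc E C /\ is_whirl E C m.

(* M_G : lcm of all m such that some SCC is an m-whirl; 1 if none;
   ∞ (None) if such m are unbounded. *)
Definition MG (V : Type) (E : V -> V -> Prop) : option nat :=
  match excluded_middle_informative
          (exists B, forall m, has_whirl E m -> m <= B) with
  | left Hb =>
      let B := proj1_sig (constructive_indefinite_description _ Hb) in
      Some (\big[lcmn/1]_(m < B.+1 | pb (has_whirl E m)) m)
  | right _ => None
  end.

Definition MG_divides (g : option nat) (m : nat) : Prop :=
  match g with
  | Some l => l %| m
  | None => False
  end.

Fixpoint walk (V : Type) (E : V -> V -> Prop) (v : V) (vs : seq V) : Prop :=
  match vs with
  | [::] => True
  | w :: ws => E v w /\ walk E w ws
  end.

Definition in_trivial_scc (V : Type) (E : V -> V -> Prop) (v : V) : Prop :=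
  exists C, trivial_scc E C /\ C v.

(* A pleasant path of length k exists: k edges, all vertices in trivial SCCs.
   (A walk through trivial SCCs never repeats a vertex, so it is a path.) *)
Definition pleasant_len (V : Type) (E : V -> V -> Prop) (k : nat) : Prop :=
  exists (v : V) (vs : seq V),
    walk E v vs /\ size vs = k /\ (forall w, (w = v \/ List.In w vs) -> in_trivial_scc E w).

Inductive ext : Type := NegInf | Fin of nat | PosInf.

Lemma pb_ex (P : nat -> Prop) : (exists n, P n) -> exists n, pb (P n).
Proof. by case=> n Hn; exists n; apply/pbP. Qed.

Lemma pb_bound (P : nat -> Prop) (Hb : exists B, forall n, P n -> n <= B) :
  forall n, pb (P n) ->
    n <= proj1_sig (constructive_indefinite_description _ Hb).
Proof.
case: (constructive_indefinite_description _ Hb) => B HB n /pbP; exact: HB.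
Qed.

Definition PG (V : Type) (E : V -> V -> Prop) : ext :=
  match excluded_middle_informative (exists k, pleasant_len E k) with
  | right _ => NegInf
  | left Hex =>
      match excluded_middle_informative
              (exists B, forall k, pleasant_len E k -> k <= B) with
      | right _ => PosInf
      | left Hb =>
          Fin (@ex_maxn (fun k => pb (pleasant_len E k)) _
                 (pb_ex Hex) (pb_bound Hb))
      end
  end.

Definition ext_lt (x : ext) (h : nat) : Prop :=
  match x with
  | NegInf => True
  | Fin p => p < h
  | PosInf => False
  end.

From Stdlib Require Import ClassicalEpsilon Relations.
From mathcomp Require Import all_boot.
Set Implicit Arguments. Unset Strict Implicit. Unset Printing Implicit Defensive.

(* An assignment g of vertices of G to the variables that sends every edge of
   the tree G(t) to an edge of G evaluates t to g(x_1) rather than to ∞; as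
   t ≈ t' holds, g must then also send every edge of G(t') to an edge of G.
   If G has an m-whirl, sending x to a vertex in block d_T(x) mod m is such an
   assignment, and reading it back along G(t') gives d_T(x) ≡ d_T'(x) mod m,
   so m divides M_{t,t'}.  If G has a pleasant path of length k ≥ h(T),
   sending x to its d_T(x)-th vertex is such an assignment; the vertices of
   the path lie in trivial SCCs, so no edge of G leads back along it, every
   edge of G(t') goes forward on the path, and d_T' ≤ d_T.  Then h(T') ≤ k
   too, the symmetric argument gives d_T = d_T', and since a term is
   determined by its variables and their depths, t = t'. *)

Lemma vars_leftmost t : vars t = leftmost t :: behead (vars t).
Proof. by elim: t => [i|t1 IH1 t2 _] //=; rewrite IH1. Qed.

Lemma leftmost_in_vars t : leftmost t \in vars t.
Proof. by rewrite vars_leftmost mem_head. Qed.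

Lemma depth_leftmost t : depth t (leftmost t) = 0.
Proof. by elim: t => //= t1 IH1 t2 _; rewrite leftmost_in_vars. Qed.

Lemma depth_gt0 t x : x \in vars t -> x != leftmost t -> 0 < depth t x.
Proof.
elim: t => [i|t1 IH1 t2 _] /=; first by rewrite inE => ->.
by case: ifP => // x_t1 _; apply: IH1.
Qed.

Lemma tree_edges_vars t a b :
  (a, b) \in tree_edges t -> (a \in vars t) && (b \in vars t).
Proof.
elim: t => [//|t1 IH1 t2 IH2] /=; rewrite in_cons !mem_cat.
case/orP=> [/eqP[-> ->]|/orP[/IH1|/IH2] /andP[-> ->]]; rewrite ?orbT //.
by rewrite !leftmost_in_vars orbT.
Qed.

Lemma depth_tree_edge t a b : uniq (vars t) -> (a, b) \in tree_edges t ->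
  depth t b = (depth t a).+1.
Proof.
elim: t => [//|t1 IH1 t2 IH2] /=; rewrite cat_uniq => /and3P[u1 /hasPn dis u2].
have out1 x : x \in vars t2 -> x \in vars t1 = false.
  by move=> x_t2; apply/negbTE/dis.
rewrite in_cons mem_cat => /orP[/eqP[-> ->]|/orP[] e].
- by rewrite leftmost_in_vars out1 ?leftmost_in_vars // !depth_leftmost.
- by case/andP: (tree_edges_vars e) => -> ->; apply: IH1.
- by case/andP: (tree_edges_vars e) => /out1 -> /out1 ->; rewrite (IH2 u2 e).
Qed.

Lemma tree_edges_ind (P : nat -> Prop) t :
  P (leftmost t) -> (forall a b, (a, b) \in tree_edges t -> P a -> P b) ->
  {in vars t, forall x, P x}.
Proof.
elim: t => [i|t1 IH1 t2 IH2] /= P0 PE x; first by rewrite inE => /eqP ->.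
have PE12 a b : (a, b) \in tree_edges t1 ++ tree_edges t2 -> P a -> P b.
  by move=> e; apply: PE; rewrite in_cons e orbT.
rewrite mem_cat => /orP[].
  by apply: IH1 => // a b e; apply: PE12; rewrite mem_cat e.
apply: IH2 => [|a b e]; last by apply: PE12; rewrite mem_cat e orbT.
by apply: PE P0; rewrite mem_head.
Qed.

Lemma depth_le_height t x : x \in vars t -> depth t x <= height t.
Proof. by move=> x_t; rewrite (leq_bigmax_seq (F := depth t) (P := xpredT) _ x_t). Qed.

Lemma depth_le_rank t (r : nat -> nat) : uniq (vars t) ->
  (forall a b, (a, b) \in tree_edges t -> r a < r b) ->
  {in vars t, forall x, depth t x <= r x}.
Proof.
move=> ut r_lt; apply: tree_edges_ind => [|a b e]; first by rewrite depth_leftmost.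
by rewrite (depth_tree_edge ut e) => /leq_ltn_trans; apply; apply: r_lt.
Qed.

Lemma depth_modn_rank t (r : nat -> nat) m : uniq (vars t) ->
  (forall a b, (a, b) \in tree_edges t -> r b = (r a).+1 %[mod m]) ->
  {in vars t, forall x, r x = r (leftmost t) + depth t x %[mod m]}.
Proof.
move=> ut r_succ; apply: tree_edges_ind => [|a b e ra].
  by rewrite depth_leftmost addn0.
rewrite (r_succ _ _ e) (depth_tree_edge ut e) addnS -[(r a).+1]addn1.
by rewrite -[(_ + depth t a).+1]addn1 -modnDml ra modnDml.
Qed.

Lemma eq_depth_App_vars_l t1 t2 t1' t2' :
  uniq (vars t1 ++ vars t2) -> vars t1 ++ vars t2 = vars t1' ++ vars t2' ->
  {in vars t1 ++ vars t2, depth (App t1 t2) =1 depth (App t1' t2')} ->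
  vars t1 = vars t1'.
Proof.
wlog le_k : t1 t2 t1' t2' / size (vars t1) <= size (vars t1').
  move=> W u e d; case: (leqP (size (vars t1)) (size (vars t1'))) => [le_k|/ltnW le_k].
    exact: (W t1 t2 t1' t2').
  symmetry; apply: (W t1' t2' t1 t2) => //; first by rewrite -e.
  by move=> x; rewrite -e => /d.
move=> u e d; move: le_k; rewrite leq_eqVlt => /orP[/eqP/eqseq_cat eq_k|lt_k].
  by move/eqP: e; rewrite eq_k => /andP[/eqP].
(* Otherwise the root y of t2' lies strictly inside t2, at depth > 1 in t,
   while it has depth 1 in t'. *)
set k := size (vars t1) in lt_k; set k' := size (vars t1') in lt_k.
have u' := u; rewrite e in u'.
move: u u'; rewrite !cat_uniq => /and3P[_ /hasPn dis1 _] /and3P[_ /hasPn dis1' _].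
have e1 : vars t1' = vars t1 ++ take (k' - k) (vars t2).
  by rewrite -(take_size_cat (vars t2') (erefl k')) -e take_cat ltnNge (ltnW lt_k).
have e2 : vars t2' = drop (k' - k) (vars t2).
  by rewrite -(drop_size_cat (vars t2') (erefl k')) -e drop_cat ltnNge (ltnW lt_k).
set y := leftmost t2'.
have y_t2 : y \in vars t2.
  by apply: (mem_drop (n0 := k' - k)); rewrite -e2 leftmost_in_vars.
have y_t1' : y \notin vars t1' := dis1' _ (leftmost_in_vars t2').
have y_ne : y != leftmost t2.
  apply: contraNneq y_t1' => ->.
  by rewrite e1 mem_cat (vars_leftmost t2) -(subnSK lt_k) /= mem_head orbT.
have := d y; rewrite mem_cat y_t2 orbT /= (negbTE y_t1') depth_leftmost.
rewrite (negbTE (dis1 _ y_t2)) => /(_ isT) [] d0.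
by have := depth_gt0 y_t2 y_ne; rewrite d0.
Qed.

Lemma depth_inj t t' : uniq (vars t) -> vars t' = vars t ->
  {in vars t, depth t =1 depth t'} -> t = t'.
Proof.
elim: t t' => [i|t1 IH1 t2 IH2] [i'|t1' t2'] /=.
- by move=> _ [->].
- move=> _ /(congr1 size); rewrite size_cat (vars_leftmost t1') (vars_leftmost t2') /=.
  by rewrite addnS.
- move=> _ /(congr1 size); rewrite size_cat (vars_leftmost t1) (vars_leftmost t2) /=.
  by rewrite addnS.
move=> u e d; have e1 := eq_depth_App_vars_l u (esym e) d.
have /eqP := e; rewrite e1 eqseq_cat // eqxx => /eqP e2.
move: (u); rewrite cat_uniq => /and3P[u1 /hasPn dis u2].
congr App; [apply: IH1 => // x x_t1 | apply: IH2 => // x x_t2].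
  by have := d x; rewrite /= mem_cat x_t1 -e1 x_t1 => ->.
have := d x; rewrite /= mem_cat x_t2 orbT -e1 (negbTE (dis _ x_t2)).
by move=> /(_ isT) [].
Qed.

Section GraphAlgebra.

Variables (V : Type) (E : V -> V -> Prop).

Definition tree_hom (t : term) (g : nat -> V) : Prop :=
  forall a b, (a, b) \in tree_edges t -> E (g a) (g b).

Lemma eval_tree_hom t g :
  tree_hom t g -> eval E (fun i => Some (g i)) t = Some (g (leftmost t)).
Proof.
elim: t => [//|t1 IH1 t2 IH2] /= hom.
have hom12 a b : (a, b) \in tree_edges t1 ++ tree_edges t2 -> E (g a) (g b).
  by move=> e; apply: hom; rewrite in_cons e orbT.
rewrite IH1 ?IH2 => [|a b e|a b e]; try by apply: hom12; rewrite mem_cat e ?orbT.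
by rewrite /= ifT //; apply/pbP/hom/mem_head.
Qed.

Lemma eval_Some_inv t g v : eval E (fun i => Some (g i)) t = Some v ->
  v = g (leftmost t) /\ tree_hom t g.
Proof.
elim: t v => [i v [] //|t1 IH1 t2 IH2 v] /=.
case: (eval _ _ t1) IH1 => [w1|//] /(_ w1 erefl) [-> hom1].
case: (eval _ _ t2) IH2 => [w2|//] /(_ w2 erefl) [-> hom2].
rewrite /=; case: pbP => // e12 [<-]; split=> // a b.
by rewrite in_cons mem_cat => /orP[/eqP[-> ->]|/orP[/hom1|/hom2]].
Qed.

Lemma satisfies_tree_hom t t' g :
  satisfies E t t' -> tree_hom t g -> tree_hom t' g.
Proof. by move=> sat /eval_tree_hom; rewrite sat => /eval_Some_inv[]. Qed.

Lemma whirl_depth_eq_mod t t' m : uniq (vars t) -> vars t' = vars t ->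
  satisfies E t t' -> has_whirl E m ->
  {in vars t, forall x, depth t x = depth t' x %[mod m]}.
Proof.
move=> u e sat [C [_ [m_gt0 [f [_ [f_onto f_E]]]]]].
have w_ex i : exists v, C v /\ f v = i %% m := f_onto _ (ltn_pmod i m_gt0).
pose w i := proj1_sig (constructive_indefinite_description _ (w_ex i)).
have [w_C w_f] : (forall i, C (w i)) /\ (forall i, f (w i) = i %% m).
  by split=> i; case: (proj2_sig (constructive_indefinite_description _ (w_ex i))).
pose g x := w (depth t x).
have hom : tree_hom t g.
  move=> a b ab; apply/f_E; [exact: w_C|exact: w_C|].
  by rewrite /g !w_f (depth_tree_edge u ab) -[_.+1]addn1 -modnDml addn1.
have f_succ a b : (a, b) \in tree_edges t' -> f (g b) = (f (g a)).+1 %[mod m].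
  move=> /(satisfies_tree_hom sat hom) /(f_E _ _ (w_C _) (w_C _)) ->.
  by rewrite modn_mod.
have u' : uniq (vars t') by rewrite e.
have lm : leftmost t' = leftmost t.
  by move: e; rewrite (vars_leftmost t) (vars_leftmost t') => -[].
move=> x x_t; have := depth_modn_rank u' f_succ; rewrite e => /(_ x x_t).
by rewrite /g !w_f lm depth_leftmost mod0n add0n modn_mod.
Qed.

Lemma in_trivial_scc_no_return u x :
  in_trivial_scc E u -> reach E u x -> ~ E x u.
Proof.
move=> [C [[[c SCC] [v [Cv nloop]]] Cu]] ux xu.
have [cu uc] := proj1 (SCC u) Cu.
have /Cv x_v : C x.
  apply/SCC; split; first exact: rt_trans cu ux.
  exact: rt_trans (rt_step _ _ _ _ xu) uc.
by apply: nloop; rewrite -{1}x_v -(proj1 (Cv u) Cu).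
Qed.

Lemma walk_nth_edge d v vs i : walk E v vs -> i < size vs ->
  E (nth d (v :: vs) i) (nth d (v :: vs) i.+1).
Proof.
elim: vs v i => [//|w ws IH] v [|i] /= [vw w_ws] //; rewrite ltnS; exact: IH.
Qed.

Lemma walk_nth_reach d v vs i j : walk E v vs -> i <= j <= size vs ->
  reach E (nth d (v :: vs) i) (nth d (v :: vs) j).
Proof.
move=> w; elim: j => [|j IH] /andP[].
  by rewrite leqn0 => /eqP-> _; apply: rt_refl.
rewrite leq_eqVlt ltnS => /orP[/eqP-> _|ij j_lt]; first exact: rt_refl.
apply: rt_trans (IH _) (rt_step _ _ _ _ (walk_nth_edge d w j_lt)).
by rewrite ij ltnW.
Qed.

Lemma nth_walk_vertex (d v : V) vs i : i <= size vs ->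
  nth d (v :: vs) i = v \/ List.In (nth d (v :: vs) i) vs.
Proof.
elim: vs v i => [|w ws IH] v [|i] //= i_le; [by left|by left|right].
by case: (IH w i i_le) => [->|]; [left|right].
Qed.

Lemma pleasant_walk_forward v vs i j : walk E v vs ->
  (forall w, w = v \/ List.In w vs -> in_trivial_scc E w) ->
  i <= size vs -> j <= size vs ->
  E (nth v (v :: vs) i) (nth v (v :: vs) j) -> i < j.
Proof.
move=> w triv i_le j_le ij; rewrite ltnNge; apply/negP => ji.
apply: (in_trivial_scc_no_return (triv _ (nth_walk_vertex v v j_le))) ij.
by apply: walk_nth_reach w _; rewrite ji.
Qed.

Lemma pleasant_depth_le t t' k : uniq (vars t) -> vars t' = vars t ->
  satisfies E t t' -> pleasant_len E k -> height t <= k ->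
  {in vars t, forall x, depth t' x <= depth t x}.
Proof.
move=> u e sat [v [vs [w [size_vs triv]]]] ht_k.
have d_le x : x \in vars t -> depth t x <= size vs.
  by move=> x_t; rewrite size_vs (leq_trans (depth_le_height x_t)).
pose g x := nth v (v :: vs) (depth t x).
have hom : tree_hom t g.
  move=> a b ab; rewrite /g (depth_tree_edge u ab); apply: walk_nth_edge w _.
  by rewrite -(depth_tree_edge u ab) d_le //; case/andP: (tree_edges_vars ab).
rewrite -e; apply: depth_le_rank; first by rewrite e.
move=> a b /[dup] /(satisfies_tree_hom sat hom) ab.
move=> /tree_edges_vars; rewrite e => /andP[a_t b_t].
exact: pleasant_walk_forward w triv (d_le _ a_t) (d_le _ b_t) ab.
Qed.

Lemma pleasant_len_term_eq t t' k : uniq (vars t) -> vars t' = vars t ->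
  satisfies E t t' -> pleasant_len E k -> height t <= k -> t = t'.
Proof.
move=> u e sat pk ht_k.
have le_t't := pleasant_depth_le u e sat pk ht_k.
have ht'_k : height t' <= k.
  apply: leq_trans ht_k; apply/bigmax_leqP_seq => x x_t' _.
  by rewrite e in x_t'; rewrite (leq_trans (le_t't x x_t')) ?depth_le_height.
have le_tt' : {in vars t, forall x, depth t x <= depth t' x}.
  by rewrite -e; apply: (pleasant_depth_le (k := k)); rewrite ?e // => s; rewrite sat.
by apply: depth_inj u e _ => x x_t; apply/eqP; rewrite eqn_leq le_tt' ?le_t't.
Qed.

Lemma pleasant_len_lt_Htt t t' k : uniq (vars t) -> vars t' = vars t ->
  t <> t' -> satisfies E t t' -> pleasant_len E k -> k < Htt t t'.
Proof.
move=> u e ne sat pk; rewrite leq_min !ltnNge; apply/andP; split; apply/negP.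
  by move/(pleasant_len_term_eq u e sat pk).
have u' : uniq (vars t') by rewrite e.
have sat' : satisfies E t' t by move=> s; rewrite sat.
by move/(pleasant_len_term_eq u' (esym e) sat' pk)/esym.
Qed.

End GraphAlgebra.

Lemma dvdn_biggcd_seq (I : Type) (r : seq I) (F : I -> nat) d :
  (d %| \big[gcdn/0]_(i <- r) F i) = all (fun i => d %| F i) r.
Proof. by elim: r => [|i r IH]; rewrite ?big_nil ?dvdn0 // big_cons dvdn_gcd IH. Qed.

Lemma dvdn_absdiff d a b : (d %| absdiff a b) = (a == b %[mod d]).
Proof.
rewrite /absdiff; case: (leqP a b) => [ab|/ltnW ba].
  by rewrite (eqP ab) add0n eq_sym eqn_mod_dvd.
by rewrite (eqP ba) addn0 eqn_mod_dvd.
Qed.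

Lemma dvdn_Mtt n t t' d : (d %| Mtt n t t') =
  all (fun x => depth t x == depth t' x %[mod d]) (iota 1 n).
Proof. by rewrite dvdn_biggcd_seq; apply: eq_all => x; rewrite dvdn_absdiff. Qed.

Lemma Mtt_gt0 n t t' : in_B n t -> in_B n t' -> t <> t' -> 0 < Mtt n t t'.
Proof.
rewrite /in_B => vt vt' ne; rewrite lt0n -dvd0n dvdn_Mtt; apply: contra_notN ne.
move/allP => eq_depth; apply: depth_inj; rewrite ?vt ?vt' ?iota_uniq // => x x_n.
by have := eq_depth x x_n; rewrite !modn0 => /eqP.
Qed.

Lemma MG_divides_common_multiple (V : Type) (E : V -> V -> Prop) M : 0 < M ->
  (forall m, has_whirl E m -> m %| M) -> MG_divides (MG E) M.
Proof.
move=> M_gt0 whirl_dvd; rewrite /MG.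
case: excluded_middle_informative => [bounded|[]] /=.
  apply: (big_rec (fun l => l %| M)) => [|m l /pbP/whirl_dvd m_dvd l_dvd].
    exact: dvd1n.
  by rewrite dvdn_lcm m_dvd.
by exists M => m /whirl_dvd; apply: dvdn_leq.
Qed.

Lemma PG_lt_bound (V : Type) (E : V -> V -> Prop) h :
  (forall k, pleasant_len E k -> k < h) -> ext_lt (PG E) h.
Proof.
move=> lt_h; rewrite /PG; case: excluded_middle_informative => //= nonempty.
case: excluded_middle_informative => [bounded|[]] /=; last first.
  by exists h => k /lt_h/ltnW.
by case: ex_maxnP => k /pbP/lt_h.
Qed.

Theorem lemma6p6 (V : Type) (E : V -> V -> Prop) (n : nat) (t t' : term) :
  in_B n t -> in_B n t' -> t <> t' -> satisfies E t t' ->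
  MG_divides (MG E) (Mtt n t t') /\ ext_lt (PG E) (Htt t t').
Proof.
move=> Bt Bt' ne sat.
have u : uniq (vars t) by rewrite Bt iota_uniq.
have e : vars t' = vars t by rewrite Bt Bt'.
split.
  apply: MG_divides_common_multiple (Mtt_gt0 Bt Bt' ne) _ => m whirl.
  rewrite dvdn_Mtt; apply/allP => x; rewrite -Bt => x_t.
  exact/eqP/(whirl_depth_eq_mod u e sat whirl).
by apply: PG_lt_bound => k; apply: pleasant_len_lt_Htt u e ne sat.
Qed.
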